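(* Let $(X,d)$ be a Cantor space. Then there exists $f\in\mathcal{H}(X)$ which has the continuous shadowing property but is not topologically stable.
   Context: A Cantor space is a compact metric space without isolated points that is totally disconnected. $\mathcal{H}(X)$ is the set of homeomorphisms; $d_{C^0}(f,g)=\sup_x d(f(x),g(x))$; $D(f,g)=\max\{d_{C^0}(f,g),d_{C^0}(f^{-1},g^{-1})\}$. $f$ is topologically stable if for every $\epsilon>0$ there is $\delta>0$ such that for every $g\in\mathcal{H}(X)$ with $D(f,g)<\delta$ there is a continuous $h:X\to X$ with $d_{C^0}(h,\mathrm{id}_X)<\epsilon$ and $h\circ g=f\circ h$. With $\tilde d(x,y)=\sup_{i\in\mathbb{Z}}2^{-|i|}d(x_i,y_i)$ on $X^{\mathbb{Z}}$ and $P(f,\delta)$ the set of $(x_i)_{i\in\mathbb{Z}}$ with $d(f(x_i),x_{i+1})\le\delta$ for all $i$, $f$ has the continuous shadowing property if for every $\epsilon>0$ there are $\delta>0$ and a continuous $r:P(f,\delta)\to X$ with $d(f^i(r(x)),x_i)\le\epsilon$ for all $x\in P(f,\delta)$, $i\in\mathbb{Z}$. *)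

From Stdlib Require Import Reals Lra ZArith List.
Open Scope R_scope.

Section Metric.
Context {X : Type} (d : X -> X -> R).

Definition is_metric : Prop :=
  (forall x y, 0 <= d x y) /\
  (forall x y, d x y = 0 <-> x = y) /\
  (forall x y, d x y = d y x) /\
  (forall x y z, d x z <= d x y + d y z).

Definition open_set (U : X -> Prop) : Prop :=
  forall x, U x -> exists r, 0 < r /\ forall y, d x y < r -> U y.

Definition compact_space : Prop :=
  forall (I : Type) (U : I -> X -> Prop),
    (forall i, open_set (U i)) ->
    (forall x, exists i, U i x) ->
    exists l : list I, forall x, exists i, In i l /\ U i x.

Definition no_isolated_points : Prop :=
  forall x eps, 0 < eps -> exists y, y <> x /\ d x y < eps.

Definition connected_subset (A : X -> Prop) : Prop :=
  ~ (exists U V : X -> Prop, open_set U /\ open_set V /\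
       (forall x, A x -> U x \/ V x) /\
       (exists x, A x /\ U x) /\ (exists x, A x /\ V x) /\
       (forall x, A x -> U x -> V x -> False)).

Definition totally_disconnected : Prop :=
  forall A : X -> Prop, connected_subset A -> forall x y, A x -> A y -> x = y.

Definition cantor_space : Prop :=
  is_metric /\ inhabited X /\ compact_space /\ no_isolated_points /\
  totally_disconnected.

Definition continuous (f : X -> X) : Prop :=
  forall x eps, 0 < eps -> exists del, 0 < del /\
    forall y, d x y < del -> d (f x) (f y) < eps.

Definition homeo (f finv : X -> X) : Prop :=
  continuous f /\ continuous finv /\
  (forall x, f (finv x) = x) /\ (forall x, finv (f x) = x).

Definition dC0_lt (f g : X -> X) (eps : R) : Prop :=
  exists c, c < eps /\ forall x, d (f x) (g x) <= c.

Definition D_lt (f finv g ginv : X -> X) (eps : R) : Prop :=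
  dC0_lt f g eps /\ dC0_lt finv ginv eps.

Definition topologically_stable (f finv : X -> X) : Prop :=
  forall eps, 0 < eps -> exists del, 0 < del /\
    forall g ginv, homeo g ginv -> D_lt f finv g ginv del ->
      exists h : X -> X, continuous h /\ dC0_lt h (fun x => x) eps /\
        forall x, h (g x) = f (h x).

Definition dtilde_lt (x y : Z -> X) (eps : R) : Prop :=
  exists c, c < eps /\
    forall i : Z, (/ 2) ^ (Z.abs_nat i) * d (x i) (y i) <= c.

Definition pseudo_orbit (f : X -> X) (del : R) (x : Z -> X) : Prop :=
  forall i : Z, d (f (x i)) (x (i + 1)%Z) <= del.

Definition continuous_on_P (f : X -> X) (del : R) (r : (Z -> X) -> X) : Prop :=
  forall x, pseudo_orbit f del x -> forall eps, 0 < eps -> exists eta, 0 < eta /\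
    forall y, pseudo_orbit f del y -> dtilde_lt x y eta -> d (r x) (r y) < eps.

Definition zpow (f finv : X -> X) (i : Z) (x : X) : X :=
  match i with
  | Z0 => x
  | Zpos p => Nat.iter (Pos.to_nat p) f x
  | Zneg p => Nat.iter (Pos.to_nat p) finv x
  end.

Definition continuous_shadowing (f finv : X -> X) : Prop :=
  forall eps, 0 < eps -> exists del, 0 < del /\
    exists r : (Z -> X) -> X, continuous_on_P f del r /\
      forall x, pseudo_orbit f del x ->
        forall i : Z, d (zpow f finv i (r x)) (x i) <= eps.

End Metric.

From Stdlib Require Import Reals Lra Lia ZArith List Classical ClassicalEpsilon
  FunctionalExtensionality PropExtensionality Bool.
From Stdlib Require Cantor.
Open Scope R_scope.

(* A countable clopen base codes the points of a Cantor space by binary addresses,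
   identifying it with {0,1}^N.  Take f to be the dyadic odometer (adding 1 with
   carry) transported along this coding.  The odometer preserves prefixes of
   addresses, so f is equicontinuous and every pseudo-orbit is shadowed by its own
   initial point: r(x) = x_0 works.  The odometer truncated to the first K digits is
   D-close to f for large K and periodic, while f has no periodic point; a
   semiconjugacy h with h o g = f o h would carry a periodic point of g to one of f,
   so f is not topologically stable. *)

Lemma list_pos_lower_bound {A : Type} (l : list A) (f : A -> R) :
  (forall p, In p l -> 0 < f p) -> exists eta, 0 < eta /\ forall p, In p l -> eta <= f p.
Proof.
  induction l as [|p0 l IH]; intros Hf.
  - exists 1. split; [lra|]. intros p [].
  - destruct (IH (fun p Hp => Hf p (or_intror Hp))) as [e [He H]].
    exists (Rmin e (f p0)). split.
    + apply Rmin_glb_lt; [lra|]. apply Hf. now left.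
    + intros p [<-|Hp]; [apply Rmin_r|].
      pose proof (Rmin_l e (f p0)). pose proof (H p Hp). lra.
Qed.

Lemma list_nat_upper_bound {A : Type} (l : list A) (f : A -> nat) :
  exists N, forall p, In p l -> (f p <= N)%nat.
Proof.
  induction l as [|p0 l [N HN]].
  - exists 0%nat. intros p [].
  - exists (Nat.max N (f p0)). intros p [<-|Hp]; [lia|]. specialize (HN p Hp). lia.
Qed.

Section MetricSpace.
Context {X : Type} (d : X -> X -> R) (Hm : is_metric d).

Lemma d_nonneg x y : 0 <= d x y. Proof. apply Hm. Qed.
Lemma d_refl x : d x x = 0. Proof. now apply Hm. Qed.
Lemma d_sym x y : d x y = d y x. Proof. apply Hm. Qed.
Lemma d_triangle x y z : d x z <= d x y + d y z. Proof. apply Hm. Qed.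

Lemma d_pos x y : x <> y -> 0 < d x y.
Proof.
  intros Hxy. destruct (d_nonneg x y) as [H|H]; [exact H|].
  exfalso. apply Hxy. now apply Hm.
Qed.

Lemma open_set_ext (U V : X -> Prop) :
  (forall y, U y <-> V y) -> open_set d U -> open_set d V.
Proof.
  intros E HU y Vy. destruct (HU y (proj2 (E y) Vy)) as [r [Hr Hb]].
  exists r. split; [exact Hr|]. intros z Hz. apply E, Hb, Hz.
Qed.

Lemma open_set_True : open_set d (fun _ => True).
Proof. intros y _. exists 1. split; [lra|auto]. Qed.

Lemma open_set_and (U V : X -> Prop) :
  open_set d U -> open_set d V -> open_set d (fun y => U y /\ V y).
Proof.
  intros HU HV y [Uy Vy].
  destruct (HU y Uy) as [r1 [H1 B1]], (HV y Vy) as [r2 [H2 B2]].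
  exists (Rmin r1 r2). split; [now apply Rmin_glb_lt|].
  intros z Hz. pose proof (Rmin_l r1 r2). pose proof (Rmin_r r1 r2).
  split; [apply B1|apply B2]; lra.
Qed.

Lemma open_set_or (U V : X -> Prop) :
  open_set d U -> open_set d V -> open_set d (fun y => U y \/ V y).
Proof.
  intros HU HV y [Uy|Vy]; [destruct (HU y Uy) as [r [Hr Hb]]|destruct (HV y Vy) as [r [Hr Hb]]];
    exists r; split; auto.
Qed.

Lemma open_set_ball c r : open_set d (fun y => d c y < r).
Proof.
  intros y Hy. exists (r - d c y). split; [lra|].
  intros z Hz. pose proof (d_triangle c y z). lra.
Qed.

Lemma open_set_thickening (A : X -> Prop) r :
  open_set d (fun y => exists a, A a /\ d a y < r).
Proof.
  intros y [a [Aa Hay]]. exists (r - d a y). split; [lra|].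
  intros z Hz. exists a. split; [exact Aa|]. pose proof (d_triangle a y z). lra.
Qed.

Context (Hc : compact_space d).

Lemma lebesgue_number (G : X -> R -> Prop) :
  (forall y, exists r, 0 < r /\ G y r) ->
  exists eta, 0 < eta /\
    forall z, exists y r, G y r /\ forall w, d z w < eta -> d y w < r.
Proof.
  intros HG.
  set (I := {p : X * R | 0 < snd p /\ G (fst p) (snd p)}).
  destruct (Hc I (fun p z => d (fst (proj1_sig p)) z < snd (proj1_sig p) / 2)) as [l Hl].
  - intros p. apply open_set_ball.
  - intros z. destruct (HG z) as [r [Hr Gr]].
    exists (exist _ (z, r) (conj Hr Gr)). simpl. rewrite d_refl. lra.
  - destruct (list_pos_lower_bound l (fun p => snd (proj1_sig p) / 2)) as [e [He Hle]].
    { intros [[y r] [Hr Gr]] _. simpl in *. lra. }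
    exists e. split; [exact He|]. intros z.
    destruct (Hl z) as [[[y r] [Hr Gr]] [Hin Hz]]. specialize (Hle _ Hin).
    exists y, r. simpl in *. split; [exact Gr|].
    intros w Hw. pose proof (d_triangle y z w). lra.
Qed.

Lemma compact_decreasing_inter (C : nat -> X -> Prop) :
  (forall n, open_set d (fun y => ~ C n y)) ->
  (forall n y, C (S n) y -> C n y) ->
  (forall n, exists y, C n y) -> exists y, forall n, C n y.
Proof.
  intros Hcl Hdec Hne. apply NNPP. intros Hno.
  destruct (Hc nat (fun n y => ~ C n y) Hcl) as [l Hl].
  - intros y. apply NNPP. intros H. apply Hno. exists y. intros n.
    apply NNPP. intros Hn. apply H. now exists n.
  - destruct (list_nat_upper_bound l (fun n => n)) as [N HN].
    destruct (Hne N) as [y Hy]. destruct (Hl y) as [n [Hin Hn]].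
    apply Hn. specialize (HN n Hin). simpl in HN.
    clear Hin Hl. induction HN; auto.
Qed.

Lemma closed_disjoint_separated (A B : X -> Prop) :
  open_set d (fun y => ~ A y) -> open_set d (fun y => ~ B y) ->
  (forall y, A y -> B y -> False) ->
  exists eta, 0 < eta /\ forall a b, A a -> B b -> eta <= d a b.
Proof.
  intros HA HB Hdis.
  destruct (lebesgue_number
    (fun y r => (forall w, d y w < r -> ~ A w) \/ (forall w, d y w < r -> ~ B w)))
    as [eta [He Hl]].
  - intros y. destruct (classic (A y)) as [Ay|Ay].
    + destruct (HB y (Hdis y Ay)) as [r [Hr H]]. exists r. auto.
    + destruct (HA y Ay) as [r [Hr H]]. exists r. auto.
  - exists eta. split; [exact He|]. intros a b Ha Hb. apply Rnot_lt_le. intros Hab.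
    destruct (Hl a) as [y [r [[G|G] Hball]]].
    + apply (G a); [apply Hball; rewrite d_refl; lra|exact Ha].
    + exact (G b (Hball b Hab) Hb).
Qed.

Definition clopen (C : X -> Prop) : Prop := open_set d C /\ open_set d (fun y => ~ C y).

Lemma clopen_ext (C D : X -> Prop) : (forall y, C y <-> D y) -> clopen C -> clopen D.
Proof.
  intros E [H1 H2]. split; [exact (open_set_ext C D E H1)|].
  apply (open_set_ext (fun y => ~ C y)); [|exact H2]. intros y. now rewrite (E y).
Qed.

Lemma clopen_True : clopen (fun _ => True).
Proof.
  split; [apply open_set_True|]. intros y H. now contradiction H.
Qed.

Lemma clopen_not (C : X -> Prop) : clopen C -> clopen (fun y => ~ C y).
Proof.
  intros [H1 H2]. split; [exact H2|].
  apply (open_set_ext C); [|exact H1]. intros y. split; [tauto|apply NNPP].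
Qed.

Lemma clopen_and (C D : X -> Prop) : clopen C -> clopen D -> clopen (fun y => C y /\ D y).
Proof.
  intros [C1 C2] [D1 D2]. split; [now apply open_set_and|].
  apply (open_set_ext (fun y => ~ C y \/ ~ D y)); [|now apply open_set_or].
  intros y. destruct (classic (C y)); tauto.
Qed.

Lemma clopen_Forall {I : Type} (l : list I) (P : I -> X -> Prop) :
  (forall i, In i l -> clopen (P i)) -> clopen (fun y => forall i, In i l -> P i y).
Proof.
  induction l as [|i0 l IH]; intros HP.
  - apply (clopen_ext (fun _ => True)); [|exact clopen_True]. intros y. split; [|auto].
    intros _ i [].
  - apply (clopen_ext (fun y => P i0 y /\ forall i, In i l -> P i y)).
    + intros y. split; [intros [H0 H] i [<-|Hi]; auto|].
      intros H. split; [apply H; now left|]. intros i Hi. apply H. now right.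
    + apply clopen_and; [apply HP; now left|]. apply IH. intros i Hi. apply HP. now right.
Qed.

Definition quasi_component (x y : X) : Prop := forall C, clopen C -> C x -> C y.

Lemma quasi_component_closed x : open_set d (fun y => ~ quasi_component x y).
Proof.
  intros y Hy.
  assert (exists C, clopen C /\ C x /\ ~ C y) as [C [HC [Cx Cy]]].
  { apply NNPP. intros Hno. apply Hy. intros C HC Cx.
    apply NNPP. intros Cy. apply Hno. now exists C. }
  destruct (proj2 HC y Cy) as [r [Hr Hb]]. exists r. split; [exact Hr|].
  intros w Hw Qw. exact (Hb w Hw (Qw C HC Cx)).
Qed.

Lemma quasi_component_refl x : quasi_component x x.
Proof. intros C _ Cx. exact Cx. Qed.

(* Compactness: [W] together with the complements of the clopen neighbourhoods
   of [x] covers [X]; the finitely many of them needed give [C]. *)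
Lemma quasi_component_inside_open x (W : X -> Prop) :
  open_set d W -> (forall y, quasi_component x y -> W y) ->
  exists C, clopen C /\ C x /\ forall y, C y -> W y.
Proof.
  intros HW HQ.
  set (Idx := option {C : X -> Prop | clopen C /\ C x}).
  set (U := fun (i : Idx) y => match i with None => W y | Some c => ~ proj1_sig c y end).
  destruct (Hc Idx U) as [l Hl].
  - intros [[C [[HCo HC] Cx]]|]; [exact HC|exact HW].
  - intros y. destruct (classic (W y)) as [Wy|Wy]; [now exists None|].
    assert (exists C, clopen C /\ C x /\ ~ C y) as [C [HC [Cx Cy]]].
    { apply NNPP. intros Hno. apply Wy, HQ. intros C HC Cx.
      apply NNPP. intros Cy. apply Hno. now exists C. }
    now exists (Some (exist _ C (conj HC Cx))).
  - set (clopen_of := fun (i : Idx) y => match i with Some c => proj1_sig c y | None => True end).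
    exists (fun y => forall i, In i l -> clopen_of i y). split; [|split].
    + apply clopen_Forall. intros [[C [HC Cx]]|] _; [exact HC|exact clopen_True].
    + intros [[C [HC Cx]]|] _; [exact Cx|exact I].
    + intros y Hy. destruct (Hl y) as [[c|] [Hi Hu]]; [|exact Hu].
      now contradiction (Hy _ Hi).
Qed.

Lemma quasi_component_one_side x (U V : X -> Prop) :
  open_set d U -> open_set d V -> (forall y, U y -> V y -> False) ->
  (forall y, quasi_component x y -> U y \/ V y) -> U x ->
  forall y, quasi_component x y -> U y.
Proof.
  intros oU oV disj cov Ux y Qy.
  destruct (quasi_component_inside_open x (fun y => U y \/ V y) (open_set_or U V oU oV) cov)
    as [C [[C1 C2] [Cx CUV]]].
  apply (Qy (fun y => C y /\ U y)); [|now split].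
  split; [now apply open_set_and|].
  apply (open_set_ext (fun y => ~ C y \/ V y)); [|now apply open_set_or].
  intros w. specialize (CUV w). specialize (disj w). destruct (classic (C w)); tauto.
Qed.

(* The two parts of a separation are closed, hence at positive distance by
   compactness; their thickenings are disjoint open sets and [quasi_component_one_side]
   applies. *)
Lemma quasi_component_connected x : connected_subset d (quasi_component x).
Proof.
  intros [U [V [oU [oV [cov [[p [Qp Up]] [[q [Qq Vq]] disj]]]]]]].
  set (A := fun y => quasi_component x y /\ ~ V y).
  set (B := fun y => quasi_component x y /\ ~ U y).
  assert (closed_A : open_set d (fun y => ~ A y)).
  { apply (open_set_ext (fun y => ~ quasi_component x y \/ V y)).
    - intros y. unfold A. destruct (classic (V y)); tauto.
    - apply open_set_or; [apply quasi_component_closed|exact oV]. }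
  assert (closed_B : open_set d (fun y => ~ B y)).
  { apply (open_set_ext (fun y => ~ quasi_component x y \/ U y)).
    - intros y. unfold B. destruct (classic (U y)); tauto.
    - apply open_set_or; [apply quasi_component_closed|exact oU]. }
  destruct (closed_disjoint_separated A B closed_A closed_B) as [eta [Heta Hsep]].
  { intros y [Qy nVy] [_ nUy]. now destruct (cov y Qy). }
  set (U' := fun y => exists a, A a /\ d a y < eta / 2).
  set (V' := fun y => exists b, B b /\ d b y < eta / 2).
  assert (disj' : forall y, U' y -> V' y -> False).
  { intros y [a [Aa Hay]] [b [Bb Hby]]. pose proof (Hsep a b Aa Bb) as Hab.
    pose proof (d_triangle a y b) as Htri. rewrite (d_sym y b) in Htri. lra. }
  assert (near : forall (P : X -> Prop) y, P y -> exists a, P a /\ d a y < eta / 2).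
  { intros P y Py. exists y. split; [exact Py|]. rewrite d_refl. lra. }
  assert (cov' : forall y, quasi_component x y -> U' y \/ V' y).
  { intros y Qy. destruct (classic (V y)) as [Vy|nVy].
    - right. apply near. split; [exact Qy|]. intros Uy. exact (disj y Qy Uy Vy).
    - left. apply near. now split. }
  assert (Up' : U' p) by (apply near; split; [exact Qp|intros Vp; exact (disj p Qp Up Vp)]).
  assert (Vq' : V' q) by (apply near; split; [exact Qq|intros Uq; exact (disj q Qq Uq Vq)]).
  pose proof (open_set_thickening A (eta / 2)) as oU'.
  pose proof (open_set_thickening B (eta / 2)) as oV'.
  destruct (cov' x (quasi_component_refl x)) as [Ux|Vx].
  - exact (disj' q (quasi_component_one_side x U' V' oU' oV' disj' cov' Ux q Qq) Vq').
  - refine (disj' p Up' (quasi_component_one_side x V' U' oV' oU' _ _ Vx p Qp)).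
    + intros y Vy Uy. exact (disj' y Uy Vy).
    + intros y Qy. destruct (cov' y Qy); auto.
Qed.

Context (Htd : totally_disconnected d).

Lemma clopen_nbhd_small x eps : 0 < eps ->
  exists C, clopen C /\ C x /\ forall y, C y -> d x y < eps.
Proof.
  intros He. apply quasi_component_inside_open; [apply open_set_ball|].
  intros y Qy.
  rewrite <- (Htd _ (quasi_component_connected x) x y (quasi_component_refl x) Qy), d_refl.
  exact He.
Qed.

Lemma countable_clopen_base : exists B : nat -> X -> Prop,
  (forall i, clopen (B i)) /\
  (forall z eps, 0 < eps -> exists i, B i z /\ forall y, B i y -> d z y < eps).
Proof.
  assert (small : forall n x, {C | clopen C /\ C x /\ forall y, C y -> d x y < / INR (S n)}).
  { intros n x. apply constructive_indefinite_description, clopen_nbhd_small.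
    apply Rinv_0_lt_compat, lt_0_INR. lia. }
  assert (cover : forall n, {l : list X | forall z, exists x, In x l /\ proj1_sig (small n x) z}).
  { intros n. apply constructive_indefinite_description, (Hc X (fun x => proj1_sig (small n x))).
    - intros x. apply (proj2_sig (small n x)).
    - intros z. exists z. apply (proj2_sig (small n z)). }
  exists (fun i => let (n, k) := Cantor.of_nat i in
            match nth_error (proj1_sig (cover n)) k with
            | Some x => proj1_sig (small n x)
            | None => fun _ => False
            end).
  split.
  - intros i. destruct (Cantor.of_nat i) as [n k]. destruct nth_error as [x|].
    + apply (proj2_sig (small n x)).
    + apply (clopen_ext (fun y => ~ True)); [tauto|apply clopen_not, clopen_True].
  - intros z eps He. destruct (archimed_cor1 (eps / 2)) as [N [HN HN0]]; [lra|].
    destruct (proj2_sig (cover N) z) as [x [Hx Hz]].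
    destruct (In_nth_error _ _ Hx) as [k Hk].
    exists (Cantor.to_nat (N, k)). rewrite Cantor.cancel_of_to, Hk.
    destruct (proj2_sig (small N x)) as [_ [_ Hsmall]].
    assert (/ INR (S N) <= / INR N).
    { apply Rinv_le_contravar; [now apply lt_0_INR|]. rewrite S_INR. lra. }
    split; [exact Hz|]. intros y Hy.
    pose proof (Hsmall z Hz) as Hxz. pose proof (Hsmall y Hy).
    pose proof (d_triangle z x y). rewrite (d_sym x z) in Hxz. lra.
Qed.

End MetricSpace.

Definition eq_upto (N : nat) (a b : nat -> bool) : Prop :=
  forall k, (k < N)%nat -> a k = b k.

Lemma eq_upto_sym N a b : eq_upto N a b -> eq_upto N b a.
Proof. intros H k Hk. symmetry. auto. Qed.

Lemma eq_upto_trans N a b c : eq_upto N a b -> eq_upto N b c -> eq_upto N a c.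
Proof. intros H1 H2 k Hk. rewrite H1; auto. Qed.

Lemma eq_upto_le M N a b : (M <= N)%nat -> eq_upto N a b -> eq_upto M a b.
Proof. intros HM H k Hk. apply H. lia. Qed.

Section Odometer.
Local Open Scope nat_scope.

Definition prefix_preserving (phi : (nat -> bool) -> nat -> bool) : Prop :=
  forall N a b, eq_upto N a b -> eq_upto N (phi a) (phi b).

Fixpoint all_ones (a : nat -> bool) (k : nat) : bool :=
  match k with O => true | S k => a 0 && all_ones (fun j => a (S j)) k end.

Fixpoint all_zeros (a : nat -> bool) (k : nat) : bool :=
  match k with O => true | S k => negb (a 0) && all_zeros (fun j => a (S j)) k end.

(* Adding 1 to the dyadic integer with binary digits [a 0, a 1, ...]:
   digit [k] flips iff all digits below it are 1 (resp. 0 for subtracting 1). *)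
Definition odometer (a : nat -> bool) (k : nat) : bool := xorb (a k) (all_ones a k).
Definition odometer_inv (a : nat -> bool) (k : nat) : bool := xorb (a k) (all_zeros a k).

Lemma all_ones_eq_upto k a b : eq_upto k a b -> all_ones a k = all_ones b k.
Proof.
  revert a b; induction k as [|k IH]; intros a b H; simpl; auto.
  rewrite (H 0) by lia. f_equal. apply IH. intros j Hj. apply H. lia.
Qed.

Lemma all_zeros_eq_upto k a b : eq_upto k a b -> all_zeros a k = all_zeros b k.
Proof.
  revert a b; induction k as [|k IH]; intros a b H; simpl; auto.
  rewrite (H 0) by lia. f_equal. apply IH. intros j Hj. apply H. lia.
Qed.

Lemma odometer_prefix_preserving : prefix_preserving odometer.
Proof.
  intros N a b H k Hk. unfold odometer. rewrite (H k Hk). f_equal.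
  apply all_ones_eq_upto. intros j Hj. apply H. lia.
Qed.

Lemma odometer_inv_prefix_preserving : prefix_preserving odometer_inv.
Proof.
  intros N a b H k Hk. unfold odometer_inv. rewrite (H k Hk). f_equal.
  apply all_zeros_eq_upto. intros j Hj. apply H. lia.
Qed.

Lemma all_zeros_odometer k a : all_zeros (odometer a) k = all_ones a k.
Proof.
  revert a; induction k as [|k IH]; intros a; simpl; auto.
  unfold odometer at 1. simpl. destruct (a 0) eqn:E; simpl; [|reflexivity].
  rewrite <- IH. apply all_zeros_eq_upto. intros j _. unfold odometer. simpl.
  rewrite E. reflexivity.
Qed.

Lemma all_ones_odometer_inv k a : all_ones (odometer_inv a) k = all_zeros a k.
Proof.
  revert a; induction k as [|k IH]; intros a; simpl; auto.
  unfold odometer_inv at 1. simpl. destruct (a 0) eqn:E; simpl; [reflexivity|].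
  rewrite <- IH. apply all_ones_eq_upto. intros j _. unfold odometer_inv. simpl.
  rewrite E. reflexivity.
Qed.

Lemma odometer_invK a : odometer_inv (odometer a) = a.
Proof.
  apply functional_extensionality. intros k. unfold odometer_inv at 1.
  rewrite all_zeros_odometer. unfold odometer. now destruct (a k), (all_ones a k).
Qed.

Lemma odometerK a : odometer (odometer_inv a) = a.
Proof.
  apply functional_extensionality. intros k. unfold odometer at 1.
  rewrite all_ones_odometer_inv. unfold odometer_inv. now destruct (a k), (all_zeros a k).
Qed.

Lemma odometer2_0 a : odometer (odometer a) 0 = a 0.
Proof. unfold odometer. simpl. now destruct (a 0). Qed.

Lemma odometer2_S a j : odometer (odometer a) (S j) = odometer (fun i => a (S i)) j.
Proof.
  unfold odometer at 1. simpl. unfold odometer at 2. simpl.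
  destruct (a 0) eqn:E; simpl.
  - rewrite xorb_false_r. unfold odometer. simpl. now rewrite E.
  - assert (Hs : forall i, odometer a (S i) = a (S i)).
    { intros i. unfold odometer. simpl. rewrite E. apply xorb_false_r. }
    rewrite Hs. unfold odometer at 2. f_equal. apply all_ones_eq_upto.
    intros i _. apply Hs.
Qed.

Lemma iter_odometer_pow2 K a :
  Nat.iter (2 ^ K) odometer a =
  fun k => if k <? K then a k else odometer (fun j => a (K + j)) (k - K).
Proof.
  revert a; induction K as [|K IH]; intros a; apply functional_extensionality; intros k.
  - simpl. now rewrite Nat.sub_0_r.
  - replace (2 ^ S K) with (2 ^ K + 2 ^ K) by (simpl; lia).
    rewrite Nat.iter_add, !IH.
    destruct (Nat.ltb_spec k K) as [Hk|Hk].
    + now rewrite (proj2 (Nat.ltb_lt k (S K))) by lia.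
    + set (c := fun j => a (K + j)).
      replace (fun j => (if K + j <? K then a (K + j) else odometer c (K + j - K)))
        with (odometer c).
      2:{ apply functional_extensionality. intros j.
          rewrite (proj2 (Nat.ltb_ge (K + j) K)) by lia. f_equal. lia. }
      destruct (Nat.eq_dec k K) as [->|Hne].
      * rewrite Nat.sub_diag, odometer2_0, (proj2 (Nat.ltb_lt K (S K))) by lia.
        unfold c. f_equal. lia.
      * rewrite (proj2 (Nat.ltb_ge k (S K))) by lia.
        replace (k - K) with (S (k - S K)) by lia. rewrite odometer2_S.
        unfold c. do 2 f_equal. apply functional_extensionality. intros j. f_equal. lia.
Qed.

Lemma iter_odometer_pow2_digit K a : Nat.iter (2 ^ K) odometer a K = negb (a K).
Proof.
  rewrite iter_odometer_pow2, Nat.ltb_irrefl, Nat.sub_diag.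
  unfold odometer. simpl. rewrite Nat.add_0_r. now destruct (a K).
Qed.

(* The odometer acting on the first [K] digits only, i.e. addition modulo [2^K]. *)
Definition odometer_trunc (K : nat) (a : nat -> bool) (k : nat) : bool :=
  if k <? K then odometer a k else a k.
Definition odometer_trunc_inv (K : nat) (a : nat -> bool) (k : nat) : bool :=
  if k <? K then odometer_inv a k else a k.

Lemma odometer_trunc_prefix_preserving K : prefix_preserving (odometer_trunc K).
Proof.
  intros N a b H k Hk. unfold odometer_trunc.
  destruct (k <? K); [apply (odometer_prefix_preserving N)|]; auto.
Qed.

Lemma odometer_trunc_inv_prefix_preserving K : prefix_preserving (odometer_trunc_inv K).
Proof.
  intros N a b H k Hk. unfold odometer_trunc_inv.
  destruct (k <? K); [apply (odometer_inv_prefix_preserving N)|]; auto.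
Qed.

Lemma odometer_trunc_eq_upto K a : eq_upto K (odometer_trunc K a) (odometer a).
Proof. intros k Hk. unfold odometer_trunc. now rewrite (proj2 (Nat.ltb_lt k K)). Qed.

Lemma odometer_trunc_inv_eq_upto K a : eq_upto K (odometer_trunc_inv K a) (odometer_inv a).
Proof. intros k Hk. unfold odometer_trunc_inv. now rewrite (proj2 (Nat.ltb_lt k K)). Qed.

Lemma odometer_trunc_invK K a : odometer_trunc_inv K (odometer_trunc K a) = a.
Proof.
  apply functional_extensionality. intros k. unfold odometer_trunc_inv.
  destruct (Nat.ltb_spec k K) as [Hk|Hk].
  - transitivity (odometer_inv (odometer a) k); [|now rewrite odometer_invK].
    apply (odometer_inv_prefix_preserving (S k)); [|lia].
    intros j Hj. apply odometer_trunc_eq_upto. lia.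
  - unfold odometer_trunc. now rewrite (proj2 (Nat.ltb_ge k K)).
Qed.

Lemma odometer_truncK K a : odometer_trunc K (odometer_trunc_inv K a) = a.
Proof.
  apply functional_extensionality. intros k. unfold odometer_trunc.
  destruct (Nat.ltb_spec k K) as [Hk|Hk].
  - transitivity (odometer (odometer_inv a) k); [|now rewrite odometerK].
    apply (odometer_prefix_preserving (S k)); [|lia].
    intros j Hj. apply odometer_trunc_inv_eq_upto. lia.
  - unfold odometer_trunc_inv. now rewrite (proj2 (Nat.ltb_ge k K)).
Qed.

Lemma iter_odometer_trunc K m a k :
  Nat.iter m (odometer_trunc K) a k = if k <? K then Nat.iter m odometer a k else a k.
Proof.
  revert k; induction m as [|m IH]; intros k; simpl.
  - now destruct (k <? K).
  - unfold odometer_trunc at 1. destruct (Nat.ltb_spec k K) as [Hk|Hk].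
    + apply (odometer_prefix_preserving (S k)); [|lia]. intros j Hj.
      rewrite IH. now rewrite (proj2 (Nat.ltb_lt j K)) by lia.
    + rewrite IH. now rewrite (proj2 (Nat.ltb_ge k K)).
Qed.

Lemma odometer_trunc_periodic K a : Nat.iter (2 ^ K) (odometer_trunc K) a = a.
Proof.
  apply functional_extensionality. intros k. rewrite iter_odometer_trunc.
  destruct (Nat.ltb_spec k K) as [Hk|Hk]; auto.
  rewrite iter_odometer_pow2. now rewrite (proj2 (Nat.ltb_lt k K)).
Qed.

End Odometer.

Definition bool_of (P : Prop) : bool := if excluded_middle_informative P then true else false.

Lemma bool_of_true (P : Prop) : bool_of P = true <-> P.
Proof. unfold bool_of. destruct excluded_middle_informative; split; auto; discriminate. Qed.

Lemma bool_of_false (P : Prop) : bool_of P = false <-> ~ P.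
Proof.
  unfold bool_of. destruct excluded_middle_informative; split; auto; try discriminate; tauto.
Qed.

(* [a] is a homeomorphism onto the Cantor set {0,1}^N with its product topology. *)
Definition cantor_coding {X : Type} (d : X -> X -> R) (a : X -> nat -> bool) : Prop :=
  (forall x eps, 0 < eps -> exists N, forall y, eq_upto N (a y) (a x) -> d x y < eps) /\
  (forall al, exists x, a x = al) /\
  (forall x N, exists r, 0 < r /\ forall y, d x y < r -> eq_upto N (a y) (a x)).

(* The address of a point records, at each stage, on which side of the first basic
   clopen set splitting the current cylinder it lies; no isolated points make every
   nonempty cylinder split, and minimality of the splitting index makes the indices
   grow, so that cylinders shrink to points. *)
Section Address.
Context {X : Type} (d : X -> X -> R) (Hm : is_metric d) (Hc : compact_space d)
  (Hni : no_isolated_points d) (Hinh : inhabited X)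
  (B : nat -> X -> Prop) (HBc : forall i, clopen d (B i))
  (HBb : forall z eps, 0 < eps -> exists i, B i z /\ forall y, B i y -> d z y < eps).

Definition splits (C : X -> Prop) (j : nat) : Prop :=
  (exists y, C y /\ B j y) /\ (exists y, C y /\ ~ B j y).

Lemma least_split_exists C : (exists j, splits C j) ->
  exists j, splits C j /\ forall m, splits C m -> (j <= m)%nat.
Proof.
  intros H.
  destruct (dec_inh_nat_subset_has_unique_least_element _ (fun n => classic _) H)
    as [j [Hj _]].
  now exists j.
Qed.

(* Junk value [0] when nothing splits [C]. *)
Definition split_index (C : X -> Prop) : nat :=
  match excluded_middle_informative (exists j, splits C j) with
  | left H => proj1_sig (constructive_indefinite_description _ (least_split_exists C H))
  | right _ => 0%nat
  end.

Lemma split_index_spec C : (exists j, splits C j) ->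
  splits C (split_index C) /\ forall m, splits C m -> (split_index C <= m)%nat.
Proof.
  intros H. unfold split_index.
  destruct excluded_middle_informative as [H'|H']; [|contradiction].
  destruct constructive_indefinite_description as [j Hj]. exact Hj.
Qed.

Fixpoint cylinder (a : nat -> bool) (n : nat) : X -> Prop :=
  match n with
  | O => fun _ => True
  | S n => fun y => cylinder a n y /\ (B (split_index (cylinder a n)) y <-> a n = true)
  end.

(* [cylinder (address x) n], defined without reference to [address]. *)
Fixpoint cylinder_of (x : X) (n : nat) : X -> Prop :=
  match n with
  | O => fun _ => True
  | S n => fun y => cylinder_of x n y /\
             (B (split_index (cylinder_of x n)) y <-> B (split_index (cylinder_of x n)) x)
  end.

Definition address (x : X) (n : nat) : bool :=
  bool_of (B (split_index (cylinder_of x n)) x).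

Lemma cylinder_of_address x n : cylinder_of x n = cylinder (address x) n.
Proof.
  induction n as [|n IH]; simpl; auto.
  unfold address. rewrite IH.
  apply functional_extensionality. intros y. apply propositional_extensionality.
  rewrite bool_of_true. tauto.
Qed.

Lemma cylinder_eq_upto N a b : eq_upto N a b -> cylinder a N = cylinder b N.
Proof.
  induction N as [|N IH]; intros H; simpl; auto.
  rewrite IH by (apply (eq_upto_le N (S N)); auto).
  now rewrite (H N) by lia.
Qed.

Lemma address_unfold y n : address y n = bool_of (B (split_index (cylinder (address y) n)) y).
Proof. unfold address at 1. now rewrite cylinder_of_address. Qed.

Lemma cylinder_iff n a y : cylinder a n y <-> eq_upto n (address y) a.
Proof.
  induction n as [|n IH]; simpl.
  - split; auto. intros _ k Hk. lia.
  - split.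
    + intros [H1 H2]. apply IH in H1.
      intros k Hk. destruct (Nat.eq_dec k n) as [->|Hne]; [|apply H1; lia].
      rewrite address_unfold, (cylinder_eq_upto n _ _ H1).
      destruct (a n).
      * now apply bool_of_true, H2.
      * apply bool_of_false. intros HB. now apply H2 in HB.
    + intros H. assert (H1 : eq_upto n (address y) a) by (apply (eq_upto_le n (S n)); auto).
      split; [now apply IH|].
      rewrite <- (H n) by lia. rewrite address_unfold, (cylinder_eq_upto n _ _ H1).
      rewrite bool_of_true. tauto.
Qed.

Lemma cylinder_address x n : cylinder (address x) n x.
Proof. apply cylinder_iff. intros k _. reflexivity. Qed.

Lemma clopen_cylinder a n : clopen d (cylinder a n).
Proof.
  induction n as [|n IH]; simpl; [apply clopen_True|].
  apply clopen_and; [exact IH|]. destruct (a n).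
  - apply (clopen_ext d (B (split_index (cylinder a n)))); [|apply HBc]. intuition.
  - apply (clopen_ext d (fun y => ~ B (split_index (cylinder a n)) y)).
    + intuition discriminate.
    + apply clopen_not, HBc.
Qed.

Lemma nonempty_open_splits (C : X -> Prop) :
  open_set d C -> (exists y, C y) -> exists j, splits C j.
Proof.
  intros Co [y Cy]. destruct (Co y Cy) as [r [Hr Hb]].
  destruct (Hni y r Hr) as [z [Hzy Hz]].
  destruct (HBb y (d y z) (d_pos d Hm y z (not_eq_sym Hzy))) as [i [Hi Hs]].
  exists i. split; [now exists y|].
  exists z. split; [now apply Hb|]. intros Bz. specialize (Hs z Bz). lra.
Qed.

Lemma cylinder_nonempty a n : exists y, cylinder a n y.
Proof.
  induction n as [|n IH]; simpl.
  - destruct Hinh as [y]. now exists y.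
  - destruct (split_index_spec _ (nonempty_open_splits _ (proj1 (clopen_cylinder a n)) IH))
      as [[[y1 [C1 B1]] [y2 [C2 B2]]] _].
    destruct (a n); [exists y1|exists y2]; split; auto; intuition discriminate.
Qed.

Lemma cylinder_splits a n : exists j, splits (cylinder a n) j.
Proof.
  apply nonempty_open_splits; [apply clopen_cylinder|apply cylinder_nonempty].
Qed.

Lemma address_surj a : exists x, address x = a.
Proof.
  destruct (compact_decreasing_inter d Hc (cylinder a)) as [x Hx].
  - intros n. apply (clopen_cylinder a n).
  - intros n y. simpl. tauto.
  - apply cylinder_nonempty.
  - exists x. apply functional_extensionality. intros k.
    apply (proj1 (cylinder_iff (S k) a x) (Hx (S k))). lia.
Qed.

Lemma address_locally_constant x N :
  exists r, 0 < r /\ forall y, d x y < r -> eq_upto N (address y) (address x).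
Proof.
  destruct (proj1 (clopen_cylinder (address x) N) x (cylinder_address x N)) as [r [Hr Hb]].
  exists r. split; [exact Hr|]. intros y Hy. apply cylinder_iff. auto.
Qed.

Lemma cylinder_S_no_early_split a n m :
  (m <= split_index (cylinder a n))%nat -> ~ splits (cylinder a (S n)) m.
Proof.
  intros Hmn [[y1 [C1 B1]] [y2 [C2 B2]]].
  destruct (Nat.eq_dec m (split_index (cylinder a n))) as [->|Hne].
  - destruct C1 as [_ E1], C2 as [_ E2]. apply B2, E2, E1, B1.
  - destruct (split_index_spec _ (cylinder_splits a n)) as [_ Hmin].
    enough (split_index (cylinder a n) <= m)%nat by lia.
    apply Hmin. split; [exists y1|exists y2]; split; auto; [apply C1|apply C2].
Qed.

Lemma split_index_ge a n : (n <= split_index (cylinder a n))%nat.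
Proof.
  induction n as [|n IH]; [lia|].
  destruct (split_index_spec _ (cylinder_splits a (S n))) as [Hs _].
  destruct (le_lt_dec (split_index (cylinder a (S n))) (split_index (cylinder a n)))
    as [Hle|Hlt]; [|lia].
  exfalso. exact (cylinder_S_no_early_split a n _ Hle Hs).
Qed.

Lemma address_mesh x eps : 0 < eps ->
  exists N, forall y, eq_upto N (address y) (address x) -> d x y < eps.
Proof.
  intros He. destruct (HBb x eps He) as [i [Bx Hs]].
  exists (S i). intros y Hy. apply Hs, NNPP. intros By.
  apply (cylinder_S_no_early_split (address x) i i (split_index_ge (address x) i)).
  split; [exists x|exists y]; split; auto; [apply cylinder_address|now apply cylinder_iff].
Qed.

Lemma address_cantor_coding : cantor_coding d address.
Proof.
  split; [exact address_mesh|split; [exact address_surj|exact address_locally_constant]].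
Qed.

End Address.

Lemma cantor_space_coding {X : Type} (d : X -> X -> R) :
  cantor_space d -> exists a, cantor_coding d a.
Proof.
  intros [Hm [Hinh [Hc [Hni Htd]]]].
  destruct (countable_clopen_base d Hm Hc Htd) as [B [HBc HBb]].
  exists (address B). exact (address_cantor_coding d Hm Hc Hni Hinh B HBc HBb).
Qed.

Section Transport.
Context {X : Type} (d : X -> X -> R) (Hm : is_metric d) (Hc : compact_space d)
  (a : X -> nat -> bool) (Ha : cantor_coding d a).

Lemma coding_inj x y : a x = a y -> x = y.
Proof.
  intros Hxy. apply NNPP. intros Hne. destruct Ha as [mesh _].
  destruct (mesh x (d x y) (d_pos d Hm x y Hne)) as [N HN].
  enough (d x y < d x y) by lra.
  apply HN. rewrite Hxy. intros k _. reflexivity.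
Qed.

Lemma coding_uniformly_continuous N :
  exists eta, 0 < eta /\ forall x y, d x y < eta -> eq_upto N (a x) (a y).
Proof.
  destruct Ha as [_ [_ loc]].
  destruct (lebesgue_number d Hm Hc (fun y r => forall w, d y w < r -> eq_upto N (a w) (a y)))
    as [eta [He Hl]]; [intros y; apply loc|].
  exists eta. split; [exact He|]. intros z w Hzw.
  destruct (Hl z) as [y [r [G Hball]]].
  apply (eq_upto_trans _ _ (a y)); [|apply eq_upto_sym]; apply G, Hball; [|exact Hzw].
  rewrite d_refl; [exact He|exact Hm].
Qed.

Lemma coding_uniform_mesh eps : 0 < eps ->
  exists N, forall x y, eq_upto N (a x) (a y) -> d x y < eps.
Proof.
  intros He. destruct Ha as [mesh [_ loc]].
  set (Idx := {p : X * nat | forall w, eq_upto (snd p) (a w) (a (fst p)) -> d (fst p) w < eps / 2}).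
  destruct (Hc Idx (fun p w => eq_upto (snd (proj1_sig p)) (a w) (a (fst (proj1_sig p)))))
    as [l Hl].
  - intros [[c M] Hp] w Hw. simpl in *. destruct (loc w M) as [r [Hr Hb]].
    exists r. split; [exact Hr|]. intros z Hz. eapply eq_upto_trans; eauto.
  - intros z. destruct (mesh z (eps / 2)) as [N HN]; [lra|].
    exists (exist _ (z, N) HN). intros k _. reflexivity.
  - destruct (list_nat_upper_bound l (fun p => snd (proj1_sig p))) as [N HN].
    exists N. intros x y Hxy.
    destruct (Hl x) as [[[c M] Hp] [Hin Hx]]. specialize (HN _ Hin). simpl in *.
    assert (Hy : eq_upto M (a y) (a c)).
    { apply (eq_upto_trans _ _ (a x)); [|exact Hx].
      apply eq_upto_sym, (eq_upto_le M N); auto. }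
    pose proof (Hp x Hx) as Hcx. pose proof (Hp y Hy).
    pose proof (d_triangle d Hm x c y) as Htri. rewrite (d_sym d Hm x c) in Htri. lra.
Qed.

Definition decode (al : nat -> bool) : X :=
  proj1_sig (constructive_indefinite_description _ (proj1 (proj2 Ha) al)).

Lemma coding_decode al : a (decode al) = al.
Proof. unfold decode. now destruct constructive_indefinite_description. Qed.

Definition lift (phi : (nat -> bool) -> nat -> bool) (x : X) : X := decode (phi (a x)).

Lemma coding_lift phi x : a (lift phi x) = phi (a x).
Proof. apply coding_decode. Qed.

Lemma coding_iter_lift phi m x : a (Nat.iter m (lift phi) x) = Nat.iter m phi (a x).
Proof. apply Nat.iter_swap_gen, coding_lift. Qed.

Lemma lift_continuous phi : prefix_preserving phi -> continuous d (lift phi).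
Proof.
  intros Hphi x eps He. destruct Ha as [mesh [_ loc]].
  destruct (mesh (lift phi x) eps He) as [N HN].
  destruct (loc x N) as [r [Hr Hb]]. exists r. split; [exact Hr|]. intros y Hy.
  apply HN. rewrite !coding_lift. apply Hphi, Hb, Hy.
Qed.

Lemma lift_homeo phi psi : prefix_preserving phi -> prefix_preserving psi ->
  (forall al, phi (psi al) = al) -> (forall al, psi (phi al) = al) ->
  homeo d (lift phi) (lift psi).
Proof.
  intros Hphi Hpsi K1 K2.
  split; [|split; [|split]]; try now apply lift_continuous.
  all: intros x; apply coding_inj; now rewrite !coding_lift.
Qed.

Lemma lift_dC0_close eps : 0 < eps -> exists K, forall phi psi,
  (forall al, eq_upto K (phi al) (psi al)) -> dC0_lt d (lift phi) (lift psi) eps.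
Proof.
  intros He. destruct (coding_uniform_mesh (eps / 2)) as [K HK]; [lra|].
  exists K. intros phi psi Hclose. exists (eps / 2). split; [lra|].
  intros x. apply Rlt_le, HK. rewrite !coding_lift. apply Hclose.
Qed.

Lemma zpow_lift_tracks phi psi N (x : Z -> X) :
  prefix_preserving phi -> prefix_preserving psi -> (forall al, psi (phi al) = al) ->
  (forall i, eq_upto N (phi (a (x i))) (a (x (i + 1)%Z))) ->
  forall i, eq_upto N (a (zpow (lift phi) (lift psi) i (x 0%Z))) (a (x i)).
Proof.
  intros Hphi Hpsi Hinv Step.
  assert (Pos : forall n, eq_upto N (a (Nat.iter n (lift phi) (x 0%Z))) (a (x (Z.of_nat n)))).
  { induction n as [|n IH]; [intros k _; reflexivity|].
    rewrite Nat.iter_succ, coding_lift.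
    replace (Z.of_nat (S n)) with (Z.of_nat n + 1)%Z by lia.
    apply (eq_upto_trans _ _ (phi (a (x (Z.of_nat n))))); [now apply Hphi|apply Step]. }
  assert (Neg : forall n,
    eq_upto N (a (Nat.iter n (lift psi) (x 0%Z))) (a (x (- Z.of_nat n)%Z))).
  { induction n as [|n IH]; [intros k _; reflexivity|].
    rewrite Nat.iter_succ, coding_lift.
    pose proof (Step (- Z.of_nat (S n))%Z) as Hs.
    replace (- Z.of_nat (S n) + 1)%Z with (- Z.of_nat n)%Z in Hs by lia.
    rewrite <- (Hinv (a (x (- Z.of_nat (S n))%Z))).
    apply Hpsi, (eq_upto_trans _ _ _ _ IH), eq_upto_sym, Hs. }
  intros [|p|p]; simpl zpow.
  - intros k _. reflexivity.
  - rewrite <- positive_nat_Z. apply Pos.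
  - replace (Z.neg p) with (- Z.of_nat (Pos.to_nat p))%Z
      by (rewrite positive_nat_Z; reflexivity).
    apply Neg.
Qed.

Lemma lift_continuous_shadowing phi psi :
  prefix_preserving phi -> prefix_preserving psi -> (forall al, psi (phi al) = al) ->
  continuous_shadowing d (lift phi) (lift psi).
Proof.
  intros Hphi Hpsi Hinv eps He.
  destruct (coding_uniform_mesh eps He) as [N HN].
  destruct (coding_uniformly_continuous N) as [eta [Heta Hclose]].
  exists (eta / 2). split; [lra|]. exists (fun x => x 0%Z). split.
  - intros x _ e He'. exists e. split; [exact He'|]. intros y _ [c [Hce Hi]].
    specialize (Hi 0%Z). simpl in Hi. lra.
  - intros x Hx i. apply Rlt_le, HN, (zpow_lift_tracks phi psi N x Hphi Hpsi Hinv).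
    intros j. rewrite <- coding_lift. apply Hclose. specialize (Hx j). lra.
Qed.

Lemma lift_odometer_not_stable (Hinh : inhabited X) :
  ~ topologically_stable d (lift odometer) (lift odometer_inv).
Proof.
  intros Hst. destruct (Hst 1 Rlt_0_1) as [del [Hdel Hs]].
  destruct (lift_dC0_close del Hdel) as [K HK].
  destruct (Hs (lift (odometer_trunc K)) (lift (odometer_trunc_inv K))) as [h [_ [_ Hconj]]].
  - apply lift_homeo.
    + apply odometer_trunc_prefix_preserving.
    + apply odometer_trunc_inv_prefix_preserving.
    + apply odometer_truncK.
    + apply odometer_trunc_invK.
  - split; apply HK; intros al; apply eq_upto_sym;
      [apply odometer_trunc_eq_upto|apply odometer_trunc_inv_eq_upto].
  - destruct Hinh as [x].
    assert (Hper : Nat.iter (2 ^ K) (lift (odometer_trunc K)) x = x).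
    { apply coding_inj. now rewrite coding_iter_lift, odometer_trunc_periodic. }
    pose proof (Nat.iter_swap_gen _ _ h _ _ Hconj (2 ^ K) x) as Hh.
    rewrite Hper in Hh.
    pose proof (f_equal (fun al => al K) (coding_iter_lift odometer (2 ^ K) (h x))) as E.
    simpl in E. rewrite <- Hh, iter_odometer_pow2_digit in E.
    destruct (a (h x) K); discriminate.
Qed.

End Transport.

Theorem corollary1p1 (X : Type) (d : X -> X -> R) :
  cantor_space d ->
  exists f finv : X -> X,
    homeo d f finv /\ continuous_shadowing d f finv /\
    ~ topologically_stable d f finv.
Proof.
  intros HX. pose proof HX as [Hm [Hinh [Hc _]]].
  destruct (cantor_space_coding d HX) as [a Ha].
  exists (lift d a Ha odometer), (lift d a Ha odometer_inv). split; [|split].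
  - apply (lift_homeo d Hm a Ha).
    + apply odometer_prefix_preserving.
    + apply odometer_inv_prefix_preserving.
    + apply odometerK.
    + apply odometer_invK.
  - apply (lift_continuous_shadowing d Hm Hc a Ha).
    + apply odometer_prefix_preserving.
    + apply odometer_inv_prefix_preserving.
    + apply odometer_invK.
  - exact (lift_odometer_not_stable d Hm Hc a Ha Hinh).
Qed.
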